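(* Let $X$ be a compact metric space and let $F:\mathscr{K}(X)\to\mathscr{K}(X)$ be a continuous monotone map. If $X$ is an attractor of $F$, then $X$ is asymptotically stable. In particular, if $X$ is a strict attractor of a finite family $\mathscr{F}$ of continuous maps of $X$ (i.e. of its Hutchinson operator), then $X$ is asymptotically stable for the Hutchinson operator.
   Context: $\mathscr{K}(X)$ is the set of nonempty compact subsets of $X$ with the Hausdorff distance $\mathrm{d_H}$. $F$ is monotone if $A\subset B$ implies $F(A)\subset F(B)$. $K\in\mathscr{K}(X)$ is an attractor of $F$ if there is an open set $\mathcal{U}\subset\mathscr{K}(X)$ containing $K$ with $F^n(C)\to K$ in $\mathrm{d_H}$ for every $C\in\mathcal{U}$. An attractor $K$ is asymptotically stable if moreover for every $\varepsilon>0$ there is $\delta>0$ such that $\mathrm{d_H}(F^n(S),K)<\varepsilon$ for all $n\geq0$ and all $S\in\mathscr{K}(X)$ with $\mathrm{d_H}(S,K)<\delta$. The Hutchinson operator of $\mathscr{F}=\{f_1,\dots,f_k\}$ is $F(A)=\bigcup_i f_i(A)$. $K$ is a strict attractor if there is an open $U\subset X$ with $K\subset U$ and $F^n(S)\to K$ for all nonempty compact $S\subset U$. *)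

From Stdlib Require Import Reals List.
From Coquelicot Require Import Rbar Lub.
Open Scope R_scope.
Set Implicit Arguments.

Record MetricSpace := {
  mcarrier :> Type;
  mdist : mcarrier -> mcarrier -> R;
  mdist_eq0 : forall x y, mdist x y = 0 <-> x = y;
  mdist_sym : forall x y, mdist x y = mdist y x;
  mdist_tri : forall x y z, mdist x z <= mdist x y + mdist y z
}.

Section Defs.
Variable M : MetricSpace.

Definition mopen (U : M -> Prop) : Prop :=
  forall x, U x -> exists r, 0 < r /\ forall y, mdist M x y < r -> U y.

Definition mcompact (A : M -> Prop) : Prop :=
  forall (I : Type) (G : I -> M -> Prop),
    (forall i, mopen (G i)) ->
    (forall x, A x -> exists i, G i x) ->
    exists l : list I, forall x, A x -> exists i, In i l /\ G i x.

Definition compact_space : Prop := mcompact (fun _ => True).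

Definition mcontinuous (f : M -> M) : Prop :=
  forall x eps, 0 < eps -> exists delta, 0 < delta /\
    forall y, mdist M x y < delta -> mdist M (f x) (f y) < eps.

Record KX := {
  kset : M -> Prop;
  kset_ne : exists x, kset x;
  kset_cpt : mcompact kset
}.

Definition point_set_dist (x : M) (B : M -> Prop) : R :=
  real (Glb_Rbar (fun r => exists b, B b /\ r = mdist M x b)).

Definition excess (A B : M -> Prop) : R :=
  real (Lub_Rbar (fun r => exists a, A a /\ r = point_set_dist a B)).

Definition dH (A B : KX) : R :=
  Rmax (excess (kset A) (kset B)) (excess (kset B) (kset A)).

Definition monotone (F : KX -> KX) : Prop :=
  forall A B, (forall x, kset A x -> kset B x) ->
    forall x, kset (F A) x -> kset (F B) x.

Definition dH_continuous (F : KX -> KX) : Prop :=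
  forall A eps, 0 < eps -> exists delta, 0 < delta /\
    forall B, dH A B < delta -> dH (F A) (F B) < eps.

Definition K_open (U : KX -> Prop) : Prop :=
  forall A, U A -> exists r, 0 < r /\ forall B, dH A B < r -> U B.

Definition dH_converges (s : nat -> KX) (K : KX) : Prop :=
  forall eps, 0 < eps -> exists N, forall n, (N <= n)%nat -> dH (s n) K < eps.

Definition attractor (F : KX -> KX) (K : KX) : Prop :=
  exists U, K_open U /\ U K /\
    forall C, U C -> dH_converges (fun n => Nat.iter n F C) K.

Definition asymptotically_stable (F : KX -> KX) (K : KX) : Prop :=
  attractor F K /\
  forall eps, 0 < eps -> exists delta, 0 < delta /\
    forall (S : KX) (n : nat), dH S K < delta -> dH (Nat.iter n F S) K < eps.

Definition is_hutchinson (fs : list (M -> M)) (H : KX -> KX) : Prop :=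
  forall A y, kset (H A) y <-> exists f, In f fs /\ exists x, kset A x /\ y = f x.

Definition strict_attractor (H : KX -> KX) (K : KX) : Prop :=
  exists U : M -> Prop, mopen U /\ (forall x, kset K x -> U x) /\
    forall S : KX, (forall x, kset S x -> U x) ->
      dH_converges (fun n => Nat.iter n H S) K.

End Defs.

From Stdlib Require Import Reals List Lra Lia Classical IndefiniteDescription.
From Coquelicot Require Import Rbar Lub.
Open Scope R_scope.

(* Since every compact set lies inside X, dH(S, X) < e says exactly that S is
   e-dense in X, so stability asks that F^j(S) stay e-dense for all j.
   - Finite horizon: attraction of X itself and monotonicity force F(X) = X,
     so continuity of the iterates at X controls F^j(S) for j < N.
   - Tail: fix a finite r/4-net a of X and consider m-tuples t close to a.
     The finite set {t_i} lies in the basin, so F^j{t_i} is eventually dense.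
     The tuples for which this happens from time n on are closed (continuity
     of F^j), so a Baire argument on boxes of tuples (nested boxes meet, by
     compactness) gives a box B(c, rho) of tuples working with a common n.
     Any S with dH(S, X) < rho contains such a tuple, and monotonicity
     transfers the density to F^j(S).
   - The Hutchinson operator of finitely many continuous maps is continuous and
     monotone, and a strict attractor equal to X attracts every compact set. *)

Lemma finite_pos_min {T : Type} (l : list T) (P : T -> R -> Prop) :
  (forall x d d', P x d -> 0 < d' <= d -> P x d') ->
  (forall x, In x l -> exists d, 0 < d /\ P x d) ->
  exists d, 0 < d /\ forall x, In x l -> P x d.
Proof.
  intros Hshrink. induction l as [|a l IHl]; intros H.
  - exists 1. split; [lra | intros x []].
  - destruct IHl as [d1 [Hd1 P1]]; [intros x Hx; apply H; right; exact Hx|].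
    destruct (H a (or_introl eq_refl)) as [d2 [Hd2 P2]].
    pose proof (Rmin_pos d1 d2 Hd1 Hd2). pose proof (Rmin_l d1 d2). pose proof (Rmin_r d1 d2).
    exists (Rmin d1 d2). split; [assumption|].
    intros x [<-|Hx]; [apply Hshrink with d2 | apply Hshrink with d1]; auto; lra.
Qed.

Lemma nat_pos_min (m : nat) (P : nat -> R -> Prop) :
  (forall i d d', P i d -> 0 < d' <= d -> P i d') ->
  (forall i, (i < m)%nat -> exists d, 0 < d /\ P i d) ->
  exists d, 0 < d /\ forall i, (i < m)%nat -> P i d.
Proof.
  intros Hshrink H. destruct (finite_pos_min (seq 0 m) P Hshrink) as [d [Hd Pd]].
  - intros i Hi. apply in_seq in Hi. apply H. lia.
  - exists d. split; [exact Hd|]. intros i Hi. apply Pd, in_seq. lia.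
Qed.

Section MetricFacts.
Context {M : MetricSpace}.

Lemma dist_refl (x : M) : mdist M x x = 0.
Proof. apply (mdist_eq0 M). reflexivity. Qed.

Lemma dist_nonneg (x y : M) : 0 <= mdist M x y.
Proof.
  pose proof (mdist_tri M x y x) as Htri.
  rewrite dist_refl, (mdist_sym M y x) in Htri. lra.
Qed.

Lemma ball_open (c : M) (r : R) : mopen M (fun z => mdist M c z < r).
Proof.
  intros x Hx. exists (r - mdist M c x). split; [lra|].
  intros y Hy. pose proof (mdist_tri M c x y). lra.
Qed.

Lemma outer_ball_open (c : M) (r : R) : mopen M (fun z => r < mdist M c z).
Proof.
  intros x Hx. exists (mdist M c x - r). split; [lra|].
  intros y Hy. pose proof (mdist_tri M c y x). rewrite (mdist_sym M y x) in *. lra.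
Qed.

Lemma compact_positive_distance (A : M -> Prop) : mcompact M A ->
  forall x, ~ A x -> exists rho, 0 < rho /\ forall y, A y -> rho <= mdist M x y.
Proof.
  intros Hcpt x Hx.
  assert (Hpos : forall y, A y -> 0 < mdist M x y).
  { intros y Hy. destruct (Rle_lt_or_eq_dec 0 _ (dist_nonneg x y)) as [H|H]; [exact H|].
    symmetry in H. apply (mdist_eq0 M) in H. subst. contradiction. }
  destruct (Hcpt M (fun y z => A y /\ mdist M x y / 2 < mdist M x z)) as [l Hl].
  - intros y z [Hy Hz]. destruct (outer_ball_open x _ z Hz) as [r [Hr Hball]].
    exists r. split; [exact Hr|]. intros w Hw. split; [exact Hy | apply Hball, Hw].
  - intros z Hz. exists z. specialize (Hpos z Hz). split; [exact Hz | lra].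
  - destruct (finite_pos_min l (fun y d => A y -> d <= mdist M x y / 2)) as [d [Hd Hl']].
    + intros y d d' Hdy Hd' Hy. specialize (Hdy Hy). lra.
    + intros y _. destruct (classic (A y)) as [Hy|Hy].
      * exists (mdist M x y / 2). specialize (Hpos y Hy). split; [lra | intros; lra].
      * exists 1. split; [lra | contradiction].
    + exists d. split; [exact Hd|]. intros y Hy. destruct (Hl y Hy) as [z [Hz [Az Hzy]]].
      specialize (Hl' z Hz Az). lra.
Qed.

Hypothesis HX : compact_space M.

Lemma compact_bounded (x0 : M) : exists B, forall x y : M, mdist M x y <= B.
Proof.
  destruct (HX M (fun c z => mdist M c z < 1)) as [l Hl].
  - intros c; apply ball_open.
  - intros x _. exists x. rewrite dist_refl. lra.
  - set (D := fold_right Rmax 0 (map (mdist M x0) l)).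
    assert (HD : forall c, In c l -> mdist M x0 c <= D).
    { unfold D. clear Hl. induction l as [|c' l IHl]; intros c Hc; [destruct Hc|].
      simpl. destruct Hc as [<-|Hc]; [apply Rmax_l|].
      eapply Rle_trans; [apply IHl, Hc | apply Rmax_r]. }
    exists (2 * (D + 1)). intros x y.
    destruct (Hl x I) as [c [Hc Hcx]]. destruct (Hl y I) as [c' [Hc' Hcy]].
    pose proof (HD c Hc). pose proof (HD c' Hc').
    pose proof (mdist_tri M x c y). pose proof (mdist_tri M c x0 y).
    pose proof (mdist_tri M x0 c' y).
    rewrite (mdist_sym M x c), (mdist_sym M c x0) in *. lra.
Qed.

Lemma cluster_point (u : nat -> M) :
  exists y, forall e, 0 < e -> forall N, exists j, (N <= j)%nat /\ mdist M (u j) y < e.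
Proof.
  apply NNPP. intro Hnone.
  assert (Hfar : forall y, exists p : R * nat,
      0 < fst p /\ forall j, (snd p <= j)%nat -> fst p <= mdist M (u j) y).
  { intro y. apply NNPP. intro Hy. apply Hnone. exists y. intros e He N.
    apply NNPP. intro Hj. apply Hy. exists (e, N). split; [exact He|].
    intros j Hj'. apply Rnot_lt_le. intro. apply Hj. eauto. }
  destruct (functional_choice _ Hfar) as [g Hg].
  destruct (HX M (fun y z => mdist M y z < fst (g y))) as [l Hl].
  - intros y; apply ball_open.
  - intros x _. exists x. rewrite dist_refl. apply Hg.
  - set (N := fold_right Nat.max 0%nat (map (fun y => snd (g y)) l)).
    destruct (Hl (u N) I) as [y [Hy Hd]].
    assert (HN : (snd (g y) <= N)%nat).
    { unfold N. clear Hd Hl N. induction l as [|b l IHl]; simpl in *; [contradiction|].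
      destruct Hy as [<-|Hy]; [lia|]. specialize (IHl Hy). lia. }
    destruct (Hg y) as [_ Hgy]. specialize (Hgy N HN).
    rewrite mdist_sym in Hgy. lra.
Qed.

Lemma finite_net (r : R) (x0 : M) : 0 < r ->
  exists (m : nat) (a : nat -> M), (0 < m)%nat /\
    forall x, exists i, (i < m)%nat /\ mdist M (a i) x < r.
Proof.
  intros Hr. destruct (HX M (fun c z => mdist M c z < r)) as [l Hl].
  - intros c; apply ball_open.
  - intros x _. exists x. rewrite dist_refl. exact Hr.
  - assert (Hnet : forall x, exists i, (i < length l)%nat /\ mdist M (nth i l x0) x < r).
    { intros x. destruct (Hl x I) as [c [Hc Hd]].
      destruct (In_nth l c x0 Hc) as [i [Hi <-]]. eauto. }
    exists (length l), (fun i => nth i l x0). split; [|exact Hnet].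
    destruct (Hnet x0) as [i [Hi _]]. lia.
Qed.

End MetricFacts.

Section Hausdorff.
Context {M : MetricSpace}.
Hypothesis HX : compact_space M.

Lemma point_set_dist_spec (a : M) (B : M -> Prop) (b0 : M) : B b0 ->
  (forall b, B b -> point_set_dist M a B <= mdist M a b) /\
  (forall e, (forall b, B b -> e <= mdist M a b) -> e <= point_set_dist M a B).
Proof.
  intros Hb0. unfold point_set_dist.
  set (D := fun r => exists b, B b /\ r = mdist M a b).
  destruct (Glb_Rbar_correct D) as [Hlb Hglb].
  assert (Hge0 : Rbar_le 0 (Glb_Rbar D)).
  { apply Hglb. intros r [b [_ ->]]. apply dist_nonneg. }
  assert (Hle : Rbar_le (Glb_Rbar D) (mdist M a b0)) by (apply Hlb; exists b0; auto).
  destruct (Glb_Rbar D) as [g| |]; simpl in *; try contradiction.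
  split.
  - intros b Hb. apply (Hlb (mdist M a b)). exists b. auto.
  - intros e He. apply (Hglb (Finite e)). intros r [b [Hb ->]]. apply He, Hb.
Qed.

Lemma point_set_dist_lt (a : M) (B : M -> Prop) (b0 : M) (e : R) : B b0 ->
  point_set_dist M a B < e -> exists b, B b /\ mdist M a b < e.
Proof.
  intros Hb0 Hlt. apply NNPP. intro Hnone.
  assert (e <= point_set_dist M a B); [|lra].
  apply (proj2 (point_set_dist_spec a B b0 Hb0)). intros b Hb.
  apply Rnot_lt_le. intro. apply Hnone. eauto.
Qed.

(* The excess of A over B is the (finite, by compactness) least upper bound of
   the distances to B from points of A. *)
Lemma excess_spec (A B : M -> Prop) (a0 b0 : M) : A a0 -> B b0 ->
  (forall a, A a -> point_set_dist M a B <= excess M A B) /\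
  (forall e, (forall a, A a -> point_set_dist M a B <= e) -> excess M A B <= e).
Proof.
  intros Ha0 Hb0. destruct (compact_bounded HX a0) as [Bd HBd]. unfold excess.
  set (D := fun r => exists a, A a /\ r = point_set_dist M a B).
  destruct (Lub_Rbar_correct D) as [Hub Hlub].
  assert (Hge : Rbar_le (point_set_dist M a0 B) (Lub_Rbar D)) by (apply Hub; exists a0; auto).
  assert (Hle : Rbar_le (Lub_Rbar D) Bd).
  { apply Hlub. intros r [a [Ha ->]]. simpl.
    eapply Rle_trans; [apply (proj1 (point_set_dist_spec a B b0 Hb0) b0 Hb0) | apply HBd]. }
  destruct (Lub_Rbar D) as [g| |]; simpl in *; try contradiction.
  split.
  - intros a Ha. apply (Hub (point_set_dist M a B)). exists a. auto.
  - intros e He. apply (Hlub (Finite e)). intros r [a [Ha ->]]. apply He, Ha.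
Qed.

Lemma dH_lt (A B : KX M) (e : R) : dH A B < e ->
  (forall a, kset A a -> exists b, kset B b /\ mdist M a b < e) /\
  (forall b, kset B b -> exists a, kset A a /\ mdist M b a < e).
Proof.
  intros H. destruct (kset_ne A) as [a0 Ha0]. destruct (kset_ne B) as [b0 Hb0].
  unfold dH in H.
  pose proof (Rmax_l (excess M (kset A) (kset B)) (excess M (kset B) (kset A))).
  pose proof (Rmax_r (excess M (kset A) (kset B)) (excess M (kset B) (kset A))).
  split.
  - intros a Ha. apply (point_set_dist_lt a _ b0); [exact Hb0|].
    pose proof (proj1 (excess_spec _ _ a0 b0 Ha0 Hb0) a Ha). lra.
  - intros b Hb. apply (point_set_dist_lt b _ a0); [exact Ha0|].
    pose proof (proj1 (excess_spec _ _ b0 a0 Hb0 Ha0) b Hb). lra.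
Qed.

Lemma dH_le (A B : KX M) (e : R) :
  (forall a, kset A a -> exists b, kset B b /\ mdist M a b <= e) ->
  (forall b, kset B b -> exists a, kset A a /\ mdist M b a <= e) ->
  dH A B <= e.
Proof.
  intros H1 H2. destruct (kset_ne A) as [a0 Ha0]. destruct (kset_ne B) as [b0 Hb0].
  unfold dH. apply Rmax_lub.
  - apply (proj2 (excess_spec _ _ a0 b0 Ha0 Hb0)). intros a Ha. destruct (H1 a Ha) as [b [Hb Hd]].
    eapply Rle_trans; [apply (proj1 (point_set_dist_spec a _ b0 Hb0) b Hb) | exact Hd].
  - apply (proj2 (excess_spec _ _ b0 a0 Hb0 Ha0)). intros b Hb. destruct (H2 b Hb) as [a [Ha Hd]].
    eapply Rle_trans; [apply (proj1 (point_set_dist_spec b _ a0 Ha0) a Ha) | exact Hd].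
Qed.

Lemma dH_sym (A B : KX M) : dH A B = dH B A.
Proof. apply Rmax_comm. Qed.

Definition dense_in (A : KX M) (e : R) : Prop :=
  forall x, exists a, kset A a /\ mdist M x a < e.

Variable X : KX M.
Hypothesis X_full : forall x, kset X x.

Lemma dH_full_dense (A : KX M) (e : R) : dH A X < e -> dense_in A e.
Proof. intros H x. exact (proj2 (dH_lt A X e H) x (X_full x)). Qed.

Lemma dense_dH_full (A : KX M) (e : R) : dense_in A e -> dH A X <= e.
Proof.
  intros Hd. apply dH_le.
  - intros a Ha. exists a. split; [apply X_full|].
    destruct (Hd a) as [b [_ Hab]]. pose proof (dist_nonneg a b). rewrite dist_refl. lra.
  - intros x _. destruct (Hd x) as [a [Ha Hxa]]. exists a. split; [exact Ha | lra].
Qed.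

End Hausdorff.



Section Tuples.
Context {M : MetricSpace}.

Definition tuple_set (m : nat) (t : nat -> M) : M -> Prop :=
  fun y => exists i, (i < m)%nat /\ y = t i.

Lemma tuple_set_compact (m : nat) (t : nat -> M) : mcompact M (tuple_set m t).
Proof.
  intros I G _ Hcov. induction m as [|m IHm].
  - exists nil. intros x [i [Hi _]]. lia.
  - destruct IHm as [l Hl].
    { intros x [i [Hi ->]]. apply Hcov. exists i. split; [lia | reflexivity]. }
    destruct (Hcov (t m)) as [j Hj]; [exists m; split; [lia | reflexivity]|].
    exists (j :: l). intros x [i [Hi ->]].
    destruct (Nat.eq_dec i m) as [->|Hne].
    + exists j. split; [left; reflexivity | exact Hj].
    + destruct (Hl (t i)) as [k [Hk Hk']]; [exists i; split; [lia | reflexivity]|].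
      exists k. split; [right; exact Hk | exact Hk'].
Qed.

Lemma tuple_set_nonempty (m : nat) (t : nat -> M) : (0 < m)%nat -> exists x, tuple_set m t x.
Proof. intros Hm. exists (t 0%nat), 0%nat. split; [exact Hm | reflexivity]. Qed.

Definition tuple_K (m : nat) (Hm : (0 < m)%nat) (t : nat -> M) : KX M :=
  @Build_KX M (tuple_set m t) (tuple_set_nonempty m t Hm) (tuple_set_compact m t).

Definition box (m : nat) (c : nat -> M) (r : R) (t : nat -> M) : Prop :=
  forall i, (i < m)%nat -> mdist M (c i) (t i) < r.

Hypothesis HX : compact_space M.

Lemma dH_tuple_K_le (m : nat) (Hm : (0 < m)%nat) (p t : nat -> M) (s : R) : 0 <= s ->
  (forall i, (i < m)%nat -> mdist M (p i) (t i) <= s) ->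
  dH (tuple_K m Hm p) (tuple_K m Hm t) <= s.
Proof.
  intros Hs Hpt. apply (dH_le HX).
  - intros y [i [Hi ->]]. exists (t i). split; [exists i; auto | apply Hpt, Hi].
  - intros y [i [Hi ->]]. exists (p i). split; [exists i; auto|].
    rewrite mdist_sym. apply Hpt, Hi.
Qed.

Lemma dense_contains_box_tuple (S : KX M) (m : nat) (c : nat -> M) (e : R) :
  dense_in S e -> exists t, box m c e t /\ forall i, kset S (t i).
Proof.
  intros Hd. destruct (functional_choice _ (fun i => Hd (c i))) as [t Ht].
  exists t. split; [intros i _; apply Ht | intros i; apply Ht].
Qed.

Lemma box_shrink (m : nat) (c p : nat -> M) (r : R) : box m c r p ->
  exists mu, 0 < mu /\ forall t, box m p mu t -> box m c r t.
Proof.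
  intros Hp.
  destruct (nat_pos_min m (fun i d => d <= r - mdist M (c i) (p i))) as [mu [Hmu Hmu']].
  - intros i d d' Hd Hd'. lra.
  - intros i Hi. exists (r - mdist M (c i) (p i)). specialize (Hp i Hi). split; lra.
  - exists mu. split; [exact Hmu|]. intros t Ht i Hi.
    specialize (Ht i Hi). specialize (Hmu' i Hi). pose proof (mdist_tri M (c i) (p i) (t i)). lra.
Qed.

(* Nested boxes (centres c_k, radii r_k > 0, each box inside the previous ones)
   have a common point of all doubled boxes: a coordinatewise cluster point of
   the centres. *)
Lemma nested_boxes_meet (m : nat) (c : nat -> nat -> M) (r : nat -> R) :
  (forall k, 0 < r k) ->
  (forall k j, (k <= j)%nat -> forall t, box m (c j) (r j) t -> box m (c k) (r k) t) ->
  exists y, forall k, box m (c k) (2 * r k) y.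
Proof.
  intros Hpos Hnest.
  destruct (functional_choice _ (fun i => cluster_point HX (fun j => c j i))) as [y Hy].
  exists y. intros k i Hi.
  destruct (Hy i (r k) (Hpos k) k) as [j [Hkj Hd]].
  assert (Hcj : mdist M (c k i) (c j i) < r k).
  { apply (Hnest k j Hkj (c j)); [|exact Hi]. intros i' _. rewrite dist_refl. apply Hpos. }
  pose proof (mdist_tri M (c k i) (c j i) (y i)). lra.
Qed.

Section BoxBaire.
Variable m : nat.
Variable C : nat -> (nat -> M) -> Prop.
Hypothesis C_closed :
  forall n p, ~ C n p -> exists s, 0 < s /\ forall t, box m p s t -> ~ C n t.

Lemma box_avoid (k : nat) (c : nat -> M) (r : R) :
  (forall n c' rho, 0 < rho -> exists t, box m c' rho t /\ ~ C n t) -> 0 < r ->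
  exists p s, 0 < s /\ forall t, box m p (2 * s) t -> box m c r t /\ ~ C k t.
Proof.
  intros Hthin Hr. destruct (Hthin k c r Hr) as [p [Hp HCp]].
  destruct (C_closed k p HCp) as [s [Hs Hs']].
  destruct (box_shrink _ _ _ _ Hp) as [mu [Hmu Hmu']].
  pose proof (Rmin_pos s mu Hs Hmu). pose proof (Rmin_l s mu). pose proof (Rmin_r s mu).
  exists p, (Rmin s mu / 2). split; [lra|].
  intros t Ht. split; [apply Hmu' | apply Hs']; intros i Hi; specialize (Ht i Hi); lra.
Qed.

Lemma box_baire (a : nat -> M) (r0 : R) : 0 < r0 ->
  (forall t, box m a r0 t -> exists n, C n t) ->
  exists n c rho, 0 < rho /\ forall t, box m c rho t -> C n t.
Proof.
  intros Hr0 Hcov. apply NNPP. intro Hnone.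
  assert (Hthin : forall n c rho, 0 < rho -> exists t, box m c rho t /\ ~ C n t).
  { intros n c rho Hrho. apply NNPP. intro H. apply Hnone. exists n, c, rho.
    split; [exact Hrho|]. intros t Ht. apply NNPP. intro. apply H. eauto. }
  (* one step of the construction of nested boxes, as a choice function *)
  assert (Hstep : forall ks : nat * ((nat -> M) * R), exists s' : (nat -> M) * R,
      0 < snd (snd ks) -> 0 < snd s' /\ forall t, box m (fst s') (2 * snd s') t ->
        box m (fst (snd ks)) (snd (snd ks)) t /\ ~ C (fst ks) t).
  { intros [k [c r]]. simpl. destruct (Rlt_dec 0 r) as [Hr|Hr].
    - destruct (box_avoid k c r Hthin Hr) as [p [s Hps]]. exists (p, s). intros _. exact Hps.
    - exists (c, r). intros; contradiction. }
  destruct (functional_choice _ Hstep) as [step HstepP].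
  set (sq := fun k => nat_rect (fun _ => ((nat -> M) * R)%type) (a, r0)
                        (fun k s => step (k, s)) k).
  assert (Hpos : forall k, 0 < snd (sq k)).
  { induction k as [|k IHk]; [exact Hr0 | apply (HstepP (k, sq k) IHk)]. }
  assert (Hnext : forall k t, box m (fst (sq (S k))) (2 * snd (sq (S k))) t ->
      box m (fst (sq k)) (snd (sq k)) t /\ ~ C k t).
  { intros k. apply (HstepP (k, sq k) (Hpos k)). }
  assert (Hnest : forall k j, (k <= j)%nat -> forall t,
      box m (fst (sq j)) (snd (sq j)) t -> box m (fst (sq k)) (snd (sq k)) t).
  { intros k j Hkj. induction Hkj as [|j Hkj IH]; [auto|].
    intros t Ht. apply IH, Hnext. intros i Hi. specialize (Ht i Hi). pose proof (Hpos (S j)). lra. }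
  destruct (nested_boxes_meet m (fun k => fst (sq k)) (fun k => snd (sq k)) Hpos Hnest) as [y Hy].
  destruct (Hcov y) as [n Hn]; [apply (Hnext 0%nat), Hy|].
  apply (Hnext n y (Hy (S n))), Hn.
Qed.

End BoxBaire.
End Tuples.

Section Dynamics.
Context {M : MetricSpace}.
Hypothesis HX : compact_space M.
Variable F : KX M -> KX M.

Lemma iter_monotone : monotone F -> forall j, monotone (Nat.iter j F).
Proof.
  intros Fm j. induction j as [|j IHj]; intros A B HAB; simpl; [exact HAB|].
  apply Fm, IHj, HAB.
Qed.

Lemma iter_continuous : dH_continuous F -> forall j, dH_continuous (Nat.iter j F).
Proof.
  intros Fc j. induction j as [|j IHj]; intros A eps He.
  - exists eps. split; [exact He | auto].
  - destruct (Fc (Nat.iter j F A) eps He) as [d1 [Hd1 P1]].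
    destruct (IHj A d1 Hd1) as [d2 [Hd2 P2]].
    exists d2. split; [exact Hd2|]. intros B HB. apply P1, P2, HB.
Qed.

Variable X : KX M.
Hypothesis X_full : forall x, kset X x.

(* If the iterates of X converge to X then F(X) = X: otherwise a point outside
   the compact set F(X), hence outside every F^n(X) with n >= 1, would stay
   at positive distance from them. *)
Lemma image_full : monotone F -> dH_converges (fun n => Nat.iter n F X) X ->
  forall x, kset (F X) x.
Proof.
  intros Fm Hconv x. apply NNPP. intro Hx.
  destruct (compact_positive_distance _ (kset_cpt (F X)) x Hx) as [rho [Hrho Hfar]].
  destruct (Hconv rho Hrho) as [N HN].
  destruct (dH_full_dense HX _ X_full _ _ (HN (S N) (le_S _ _ (le_n N))) x) as [y [Hy Hxy]].
  assert (HFy : kset (F X) y) by (revert Hy; apply Fm; intros z _; apply X_full).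
  specialize (Hfar y HFy). lra.
Qed.

Lemma iter_full : monotone F -> (forall x, kset (F X) x) ->
  forall j x, kset (Nat.iter j F X) x.
Proof.
  intros Fm FX j. induction j as [|j IHj]; intros x; simpl; [apply X_full|].
  apply (Fm X); [intros z _; apply IHj | apply FX].
Qed.

(* Stability over a finite horizon N: F^j(X) = X and F^j is continuous at X. *)
Lemma finite_horizon_stable : dH_continuous F -> monotone F -> (forall x, kset (F X) x) ->
  forall N eps, 0 < eps -> exists delta, 0 < delta /\
    forall S, dH S X < delta -> forall j, (j < N)%nat -> dH (Nat.iter j F S) X < eps.
Proof.
  intros Fc Fm FX N eps He.
  destruct (nat_pos_min N
      (fun j d => forall S, dH S X < d -> dH (Nat.iter j F S) X < eps)) as [d [Hd Pd]].
  - intros j d d' P [_ Hle] S HS. apply P. lra.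
  - intros j _. destruct (iter_continuous Fc j X (eps / 2)) as [d [Hd P]]; [lra|].
    exists d. split; [exact Hd|]. intros S HS. rewrite dH_sym in HS.
    assert (Hdense : dense_in (Nat.iter j F S) (eps / 2)).
    { intros x. exact (proj1 (dH_lt HX _ _ _ (P S HS)) x (iter_full Fm FX j x)). }
    pose proof (dense_dH_full HX _ X_full _ _ Hdense). lra.
  - exists d. split; [exact Hd|]. intros S HS j Hj. apply (Pd j Hj S HS).
Qed.

Definition eventually_dense (e : R) (A : KX M) (n : nat) : Prop :=
  forall j, (n <= j)%nat -> forall e', e < e' -> dense_in (Nat.iter j F A) e'.

Lemma converging_eventually_dense (e : R) (A : KX M) : 0 < e ->
  dH_converges (fun n => Nat.iter n F A) X -> exists n, eventually_dense e A n.
Proof.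
  intros He Hconv. destruct (Hconv e He) as [N HN]. exists N. intros j Hj e' He' x.
  destruct (dH_full_dense HX _ X_full _ _ (HN j Hj) x) as [y [Hy Hxy]].
  exists y. split; [exact Hy | lra].
Qed.

(* Failing to be eventually dense from time n on is an open condition on A,
   because it is witnessed at a single time j by a point far from F^j(A). *)
Lemma not_eventually_dense_open : dH_continuous F -> forall e A n,
  ~ eventually_dense e A n ->
  exists s, 0 < s /\ forall B, dH A B < s -> ~ eventually_dense e B n.
Proof.
  intros Fc e A n Hn.
  assert (Hwit : exists j e' x, (n <= j)%nat /\ e < e' /\
      forall y, kset (Nat.iter j F A) y -> e' <= mdist M x y).
  { apply NNPP. intro H. apply Hn. intros j Hj e' He' x. apply NNPP. intro H'. apply H.
    exists j, e', x. split; [exact Hj | split; [exact He'|]]. intros y Hy.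
    apply Rnot_lt_le. intro. apply H'. eauto. }
  destruct Hwit as (j & e' & x & Hj & He' & Hfar).
  destruct (iter_continuous Fc j A ((e' - e) / 2)) as [s [Hs Ps]]; [lra|].
  exists s. split; [exact Hs|]. intros B HB HdB.
  destruct (HdB j Hj ((e' + e) / 2) ltac:(lra) x) as [y' [Hy' Hxy']].
  destruct (proj2 (dH_lt HX _ _ _ (Ps B HB)) y' Hy') as [y [Hy Hyy']].
  specialize (Hfar y Hy). pose proof (mdist_tri M x y' y). lra.
Qed.

(* Uniform control of the tail: the Baire argument on tuples near a net. *)
Lemma uniform_tail_stable : dH_continuous F -> monotone F ->
  forall U, K_open U -> U X -> (forall C, U C -> dH_converges (fun n => Nat.iter n F C) X) ->
  forall eps, 0 < eps -> exists n delta, 0 < delta /\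
    forall S, dH S X < delta -> forall j, (n <= j)%nat -> dH (Nat.iter j F S) X < eps.
Proof.
  intros Fc Fm U HU UX Hconv eps He.
  destruct (HU X UX) as [r [Hr HrU]].
  destruct (kset_ne X) as [x0 _].
  destruct (finite_net HX (r / 4) x0) as [m [a [Hm Hnet]]]; [lra|].
  set (K := @tuple_K M m Hm).
  assert (Hbasin : forall t, box m a (r / 4) t -> U (K t)).
  { intros t Ht. apply HrU. rewrite dH_sym.
    enough (dH (K t) X <= r / 2) by lra.
    apply (dense_dH_full HX _ X_full). intros x.
    destruct (Hnet x) as [i [Hi Hax]]. exists (t i). split; [exists i; auto|].
    specialize (Ht i Hi). pose proof (mdist_tri M x (a i) (t i)).
    rewrite (mdist_sym M x (a i)) in *. lra. }
  assert (Hclosed : forall n p, ~ eventually_dense (eps / 4) (K p) n ->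
      exists s, 0 < s /\ forall t, box m p s t -> ~ eventually_dense (eps / 4) (K t) n).
  { intros n p Hp. destruct (not_eventually_dense_open Fc _ _ _ Hp) as [s [Hs Ps]].
    exists (s / 2). split; [lra|]. intros t Ht. apply Ps.
    enough (dH (K p) (K t) <= s / 2) by lra.
    apply (dH_tuple_K_le HX); [lra|]. intros i Hi. specialize (Ht i Hi). lra. }
  destruct (box_baire HX m _ Hclosed a (r / 4)) as [n [c [rho [Hrho Hbox]]]]; [lra| |].
  { intros t Ht. apply converging_eventually_dense; [lra|]. apply Hconv, Hbasin, Ht. }
  exists n, rho. split; [exact Hrho|]. intros S HS j Hj.
  destruct (dense_contains_box_tuple _ m c _ (dH_full_dense HX _ X_full _ _ HS)) as [t [Ht HtS]].
  assert (Hdense : dense_in (Nat.iter j F S) (eps / 2)).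
  { intros x. destruct (Hbox t Ht j Hj (eps / 2) ltac:(lra) x) as [y [Hy Hxy]].
    exists y. split; [|exact Hxy]. revert Hy. apply (iter_monotone Fm j (K t)).
    intros z [i [_ ->]]. apply HtS. }
  pose proof (dense_dH_full HX _ X_full _ _ Hdense). lra.
Qed.

Theorem full_attractor_asymptotically_stable :
  dH_continuous F -> monotone F -> attractor F X -> asymptotically_stable F X.
Proof.
  intros Fc Fm Hatt. split; [exact Hatt|]. intros eps He.
  destruct Hatt as [U [HU [UX Hconv]]].
  pose proof (image_full Fm (Hconv X UX)) as FX.
  destruct (uniform_tail_stable Fc Fm U HU UX Hconv eps He) as [N [d1 [Hd1 Ptail]]].
  destruct (finite_horizon_stable Fc Fm FX N eps He) as [d2 [Hd2 Phead]].
  exists (Rmin d1 d2). split; [apply Rmin_pos; assumption|].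
  intros S j HS. pose proof (Rmin_l d1 d2). pose proof (Rmin_r d1 d2).
  destruct (Compare_dec.le_lt_dec N j) as [HNj|HjN].
  - apply Ptail; [lra | exact HNj].
  - apply Phead; [lra | exact HjN].
Qed.

End Dynamics.

Section Hutchinson.
Context {M : MetricSpace}.
Variable fs : list (M -> M).
Hypothesis fs_continuous : forall f, In f fs -> mcontinuous M f.

(* A finite family of continuous maps is uniformly equicontinuous near a
   compact set A (Lebesgue-number argument on a finite subcover). *)
Lemma finite_family_uniformly_continuous (A : M -> Prop) (eps : R) :
  mcompact M A -> 0 < eps -> exists d, 0 < d /\
    forall a b f, A a -> In f fs -> mdist M a b < d -> mdist M (f a) (f b) < eps.
Proof.
  intros Hcpt He.
  assert (Hpt : forall c, exists d, 0 < d /\ forall f, In f fs ->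
      forall y, mdist M c y < d -> mdist M (f c) (f y) < eps / 2).
  { intros c. apply finite_pos_min.
    - intros f d d' P Hd' y Hy. apply P. lra.
    - intros f Hf. apply (fs_continuous f Hf c (eps / 2)). lra. }
  destruct (functional_choice _ Hpt) as [dl Hdl].
  destruct (Hcpt M (fun c z => mdist M c z < dl c / 2)) as [l Hl].
  { intros c; apply ball_open. }
  { intros x _. exists x. rewrite dist_refl. pose proof (proj1 (Hdl x)). lra. }
  destruct (finite_pos_min l (fun c d => d <= dl c / 2)) as [d [Hd Hd']].
  { intros c d d' Hc Hd'. lra. }
  { intros c _. exists (dl c / 2). pose proof (proj1 (Hdl c)). split; lra. }
  exists d. split; [exact Hd|]. intros a b f Ha Hf Hab.
  destruct (Hl a Ha) as [c [Hcl Hca]]. specialize (Hd' c Hcl).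
  destruct (Hdl c) as [_ Pc].
  pose proof (Pc f Hf a ltac:(lra)).
  pose proof (Pc f Hf b ltac:(pose proof (mdist_tri M c a b); lra)).
  pose proof (mdist_tri M (f a) (f c) (f b)). rewrite (mdist_sym M (f a) (f c)) in *. lra.
Qed.

Variable H : KX M -> KX M.
Hypothesis H_hutchinson : is_hutchinson fs H.

Lemma hutchinson_monotone : monotone H.
Proof.
  intros A B HAB y Hy. apply H_hutchinson in Hy. apply H_hutchinson.
  destruct Hy as [f [Hf [x [Hx ->]]]]. exists f. split; [exact Hf|]. exists x. auto.
Qed.

Lemma hutchinson_continuous : compact_space M -> dH_continuous H.
Proof.
  intros HX A eps He.
  destruct (finite_family_uniformly_continuous (kset A) (eps / 2) (kset_cpt A)) as [d [Hd Pd]];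
    [lra|].
  exists d. split; [exact Hd|]. intros B HB.
  destruct (dH_lt HX _ _ _ HB) as [HAB HBA].
  enough (dH (H A) (H B) <= eps / 2) by lra.
  apply (dH_le HX).
  - intros y Hy. apply H_hutchinson in Hy. destruct Hy as [f [Hf [a [Ha ->]]]].
    destruct (HAB a Ha) as [b [Hb Hab]]. exists (f b). split.
    + apply H_hutchinson. eauto.
    + left. apply Pd; assumption.
  - intros y Hy. apply H_hutchinson in Hy. destruct Hy as [f [Hf [b [Hb ->]]]].
    destruct (HBA b Hb) as [a [Ha Hba]]. exists (f a). split.
    + apply H_hutchinson. eauto.
    + left. rewrite mdist_sym. apply Pd; [exact Ha | exact Hf | rewrite mdist_sym; exact Hba].
Qed.

End Hutchinson.

(* A strict attractor that is the whole space attracts every compact set, so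
   it is an attractor whose basin is all of K(X). *)
Lemma strict_full_attractor {M : MetricSpace} (H : KX M -> KX M) (X : KX M) :
  (forall x, kset X x) -> strict_attractor H X -> attractor H X.
Proof.
  intros X_full [U [_ [XU Hconv]]]. exists (fun _ => True). split; [|split; [exact I|]].
  - intros A _. exists 1. split; [lra | auto].
  - intros C _. apply Hconv. intros x _. apply XU, X_full.
Qed.

Theorem theoremD (M : MetricSpace) (HX : compact_space M)
  (Xfull : KX M) (hfull : forall x, kset Xfull x) :
  (forall F : KX M -> KX M,
      dH_continuous F -> monotone F -> attractor F Xfull ->
      asymptotically_stable F Xfull) /\
  (forall (fs : list (M -> M)) (H : KX M -> KX M),
      (forall f, In f fs -> @mcontinuous M f) ->
      is_hutchinson fs H ->
      strict_attractor H Xfull ->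
      asymptotically_stable H Xfull).
Proof.
  split.
  - intros F. exact (full_attractor_asymptotically_stable HX F Xfull hfull).
  - intros fs H Hcont Hhut Hstrict.
    apply (full_attractor_asymptotically_stable HX H Xfull hfull).
    + exact (hutchinson_continuous fs Hcont H Hhut HX).
    + exact (hutchinson_monotone fs H Hhut).
    + exact (strict_full_attractor H Xfull hfull Hstrict).
Qed.
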